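(* Let $\mathcal{L}$ be an algebraic system and let $\mathbf{Top}\mathcal{L}$ be the category of topological $\mathcal{L}$-structures and continuous $\mathcal L$-homomorphisms. Let $\mathcal C$ be an epireflective subcategory of $\mathbf{Top}$ whose epireflection preserves products. Then $\mathrm{r}_{\mathcal C}(\mathbf{Top}\mathcal{L})$ — the class of structures on $\mathrm{r}_{\mathcal C}X$, $(\mathfrak U,X)\in\mathbf{Top}\mathcal L$, with constants $\mathrm{r}_{(X,\mathcal C)}(c_{\mathfrak U})$ and operations $\Phi(\mathrm{r}_{(X,\mathcal C)}(x_1),\dots,\mathrm{r}_{(X,\mathcal C)}(x_n))=\mathrm{r}_{(X,\mathcal C)}(\Phi_{\mathfrak U}(x_1,\dots,x_n))$ — is an epireflective subcategory of $\mathbf{Top}\mathcal{L}$.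
   Context: An epireflective subcategory $\mathcal C$ of $\mathbf{Top}$ is a full, isomorphism-closed subcategory closed under products and subspaces; each space $X$ has a reflection $\mathrm{r}_{\mathcal C}X\in\mathcal C$ with a continuous surjection $\mathrm{r}_{(X,\mathcal C)}\colon X\to \mathrm{r}_{\mathcal C}X$ through which every continuous map from $X$ into a space of $\mathcal C$ factors uniquely; $\mathrm{r}_{\mathcal C}(f)$ is the induced map. The epireflection preserves products if for every family $\{X_i\}$ of spaces the unique continuous map $\mu_{\mathcal C}\colon\mathrm{r}_{\mathcal C}\prod X_i\to\prod\mathrm{r}_{\mathcal C}X_i$ with $\pi_j\circ\mu_{\mathcal C}=\mathrm{r}_{\mathcal C}(\pi_{X_j})$ for all $j$ is a homeomorphism. An algebraic system $\mathcal L$ consists of constant symbols, function symbols of finite arity $\ge1$ and equations; a topological $\mathcal L$-structure is an $\mathcal L$-structure on a topological space with all operations (jointly) continuous; morphisms are continuous maps preserving constants and operations. *)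

(* topological spaces are mathcomp-analysis
   [topologicalType]s; arbitrary products use [prod_topology], subspaces use
   [set_type] (initial topology of the inclusion). *)
From HB Require Import structures.
From mathcomp Require Import all_boot all_order all_algebra.
From mathcomp Require Import all_classical all_reals all_analysis.

Set Implicit Arguments.
Unset Strict Implicit.
Unset Printing Implicit Defensive.

Local Open Scope classical_set_scope.

Definition is_homeomorphism (X Y : topologicalType) (f : X -> Y) : Prop :=
  continuous f /\ exists g : Y -> X, continuous g /\ cancel f g /\ cancel g f.

Definition homeomorphic (X Y : topologicalType) : Prop :=
  exists f : X -> Y, is_homeomorphism f.

Definition is_reflection (C : topologicalType -> Prop) (X R : topologicalType)
    (r : X -> R) : Prop :=
  [/\ C R, continuous r, (forall y : R, exists x : X, r x = y) &
   forall (Y : topologicalType), C Y -> forall f : X -> Y, continuous f ->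
     exists! g : R -> Y, continuous g /\ g \o r = f].

Definition epireflective_Top (C : topologicalType -> Prop) : Prop :=
  [/\ (forall X Y : topologicalType, C X -> homeomorphic X Y -> C Y),
      (forall (I : Type) (T : I -> topologicalType),
         (forall i, C (T i)) -> C (prod_topology T)),
      (forall (X : topologicalType) (A : set X), C X -> C (set_type A)) &
      (forall X : topologicalType, exists (R : topologicalType) (r : X -> R),
         @is_reflection C X R r)].

Definition is_reflected_map (X Y RX RY : topologicalType) (rX : X -> RX)
    (rY : Y -> RY) (f : X -> Y) (g : RX -> RY) : Prop :=
  continuous g /\ g \o rX = rY \o f.

Definition preserves_products (C : topologicalType -> Prop) : Prop :=
  forall (I : Type) (X : I -> topologicalType)
         (R : topologicalType) (r : prod_topology X -> R)
         (RX : I -> topologicalType) (rX : forall i, X i -> RX i),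
    @is_reflection C (prod_topology X) R r ->
    (forall i, @is_reflection C (X i) (RX i) (rX i)) ->
    forall mu : R -> prod_topology RX, continuous mu ->
      (forall j : I, is_reflected_map r (rX j) (fun x => x j)
                                      (fun y => mu y j)) ->
      is_homeomorphism mu.

Record signature := Signature {
  csym : Type;
  fsym : Type;
  arity : fsym -> nat;
  arity_pos : forall f, (0 < arity f)%N }.

Inductive term (S : signature) : Type :=
  | tvar of nat
  | tcst of csym S
  | tapp (f : fsym S) of ('I_(arity f) -> term S).

Record algebraic_system := AlgebraicSystem {
  sig_of :> signature;
  equations : term sig_of -> term sig_of -> Prop }.

Record Lstructure (S : signature) (X : Type) := LStructure {
  lconst : csym S -> X;
  lop : forall f : fsym S, ('I_(arity f) -> X) -> X }.
Arguments lconst {S X} l c.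
Arguments lop {S X} l f xs.
Arguments tvar {S} n.
Arguments tcst {S} c.
Arguments tapp {S} f ts.

Fixpoint eval_term (S : signature) (X : Type) (A : Lstructure S X)
    (v : nat -> X) (t : term S) : X :=
  match t with
  | tvar n => v n
  | tcst c => lconst A c
  | tapp f ts => lop A f (fun i => eval_term A v (ts i))
  end.

Record TopL (L : algebraic_system) := MkTopL {
  tl_space :> topologicalType;
  tl_str : Lstructure L tl_space;
  tl_cont : forall f : fsym L,
    continuous (lop tl_str f : prod_topology (fun _ : 'I_(arity f) => tl_space)
                               -> tl_space);
  tl_eqs : forall t1 t2, equations t1 t2 ->
    forall v : nat -> tl_space, eval_term tl_str v t1 = eval_term tl_str v t2 }.

Definition is_TopL_hom (L : algebraic_system) (A B : TopL L) (h : A -> B) : Prop :=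
  [/\ continuous h,
      (forall c, h (lconst (tl_str A) c) = lconst (tl_str B) c) &
      (forall f (xs : 'I_(arity f) -> A),
         h (lop (tl_str A) f xs) = lop (tl_str B) f (h \o xs))].

Definition TopL_iso (L : algebraic_system) (A B : TopL L) : Prop :=
  exists (h : A -> B) (g : B -> A),
    [/\ is_TopL_hom h, is_TopL_hom g, cancel h g & cancel g h].

Definition TopL_epi (L : algebraic_system) (A B : TopL L) (e : A -> B) : Prop :=
  forall (D : TopL L) (k1 k2 : B -> D), is_TopL_hom k1 -> is_TopL_hom k2 ->
    k1 \o e = k2 \o e -> k1 = k2.

Definition epireflective_TopL (L : algebraic_system) (K : TopL L -> Prop) : Prop :=
  (forall A B : TopL L, K A -> TopL_iso A B -> K B) /\
  (forall A : TopL L, exists (B : TopL L) (eta : A -> B),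
     [/\ K B, is_TopL_hom eta, TopL_epi eta &
      forall (D : TopL L), K D -> forall g : A -> D, is_TopL_hom g ->
        exists! k : B -> D, is_TopL_hom k /\ k \o eta = g]).

(* r_C(TopL): the structures on r_C X, for (U, X) in TopL, whose constants
   and operations are those induced by the reflection map r_(X,C), i.e.
   those B for which some C-reflection eta : X -> B of the underlying space
   of some A in TopL is an L-homomorphism (B being considered up to the
   choice of reflection, i.e. up to isomorphism). *)
Definition rC_TopL (C : topologicalType -> Prop) (L : algebraic_system)
    (B : TopL L) : Prop :=
  exists (A : TopL L) (eta : A -> B), @is_reflection C A B eta /\ is_TopL_hom eta.

From mathcomp Require Import all_boot all_order all_algebra.
From mathcomp Require Import all_classical all_reals all_analysis.

(* Let r : A -> R be the C-reflection of the space underlying a topological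
   L-structure A. Since r is surjective, there is at most one L-structure on R
   making r a homomorphism, namely Phi(r x_1, ..., r x_n) = r (Phi x_1 ... x_n);
   it is well defined and continuous because the epireflection preserves
   products: the continuous map r \o Phi : A^n -> R factors continuously
   through r^n : A^n -> R^n, which is (up to homeomorphism) the reflection of
   A^n. Equations transfer along the surjective homomorphism r, and the
   universal property of r in Top lifts to TopL because a continuous map
   factoring a homomorphism through a surjective homomorphism is itself a
   homomorphism. *)

Set Implicit Arguments.
Unset Strict Implicit.
Unset Printing Implicit Defensive.

Local Open Scope classical_set_scope.

Lemma prod_topology_proj_continuous (I : Type) (T : I -> topologicalType)
    (i : I) :
  continuous (fun g : prod_topology T => g i).
Proof.
move=> f; have /cvg_sup/(_ i) fi : f --> f by apply: cvg_id.
exact: cvg_trans (cvg_app _ fi) (@initial_continuous _ _ (fun g => g i) f).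
Qed.

Lemma prod_topology_continuous (Y : topologicalType) (I : Type)
    (T : I -> topologicalType) (f : Y -> prod_topology T) :
  (forall i, continuous (fun y => f y i)) -> continuous f.
Proof.
move=> fc y; apply/cvg_sup => i.
exact: (@continuous_comp_initial (forall i, T i) Y (T i) (fun g => g i) f (fc i) y).
Qed.

Lemma reflection_comp_homeomorphism (C : topologicalType -> Prop)
    (X R S : topologicalType) (r : X -> R) (h : R -> S) :
  (forall X Y : topologicalType, C X -> homeomorphic X Y -> C Y) ->
  is_reflection C r -> is_homeomorphism h -> is_reflection C (h \o r).
Proof.
move=> Ciso [CR rc rsurj runiv] [hc [g [gc [hK gK]]]]; split.
- by apply: (Ciso R) => //; exists h; split => //; exists g.
- by move=> x; apply: continuous_comp; [exact: rc | exact: hc].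
- by move=> s; have [x rx] := rsurj (g s); exists x; rewrite /= rx gK.
move=> Y CY f fc; have [k [[kc kr] kuniq]] := runiv Y CY f fc.
exists (k \o g); split.
  split; first by move=> s; apply: continuous_comp; [exact: gc | exact: kc].
  by apply: funext => x /=; rewrite hK; have := f_equal (@^~ x) kr.
move=> k' [k'c k'hr]; have -> : k = k' \o h.
  apply: kuniq; split => //.
  by move=> x; apply: continuous_comp; [exact: hc | exact: k'c].
by apply: funext => s /=; rewrite gK.
Qed.

Section ProductOfReflections.
Variable C : topologicalType -> Prop.
Hypothesis C_has_reflections :
  forall X : topologicalType, exists (R : topologicalType) (r : X -> R),
    is_reflection C r.
Hypothesis C_preserves_products : preserves_products C.
Variables (I : Type) (X RX : I -> topologicalType) (rX : forall i, X i -> RX i).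
Hypothesis rX_reflection : forall i : I, is_reflection C (@rX i).

Lemma reflection_prod_comparison (R : topologicalType)
    (r : prod_topology X -> R) :
  is_reflection C r ->
  exists mu : R -> prod_topology RX, continuous mu /\
    forall j, is_reflected_map r (@rX j) (fun x => x j) (fun y => mu y j).
Proof.
move=> [CR rc _ runiv].
have mu_j j : exists m : R -> RX j, is_reflected_map r (@rX j) (fun x => x j) m.
  have [CRX rXc _ _] := rX_reflection j.
  have [m [mj _]] := runiv (RX j) CRX (@rX j \o (fun x => x j))
    (fun x => continuous_comp (@prod_topology_proj_continuous _ X j x) (rXc _)).
  by exists m.
exists (fun y j => proj1_sig (cid (mu_j j)) y); split; last first.
  by move=> j; exact: proj2_sig (cid (mu_j j)).
by apply: prod_topology_continuous => j; exact: (proj2_sig (cid (mu_j j))).1.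
Qed.

Lemma reflection_prod_factor (Y : topologicalType) (h : prod_topology X -> Y) :
  C Y -> continuous h ->
  exists phi : prod_topology RX -> Y,
    continuous phi /\ forall xs, phi (fun i => rX (xs i)) = h xs.
Proof.
move=> CY hc; have [R [r r_refl]] := C_has_reflections (prod_topology X).
have [mu [muc mu_proj]] := reflection_prod_comparison r_refl.
have [_ [N [Nc [muK _]]]] :=
  C_preserves_products r_refl rX_reflection muc mu_proj.
have [_ _ _ runiv] := r_refl.
have [g [[gc gr] _]] := runiv Y CY h hc.
exists (g \o N); split.
  by move=> y; apply: continuous_comp; [exact: Nc | exact: gc].
move=> xs; have -> : (fun i => rX (xs i)) = mu (r xs).
  apply: functional_extensionality_dep => j.
  by have /= -> := f_equal (@^~ xs) (mu_proj j).2.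
by rewrite /= muK; have := f_equal (@^~ xs) gr.
Qed.

End ProductOfReflections.

Section TopLHomomorphisms.
Variable L : algebraic_system.

Lemma is_TopL_hom_comp (A B D : TopL L) (h : A -> B) (k : B -> D) :
  is_TopL_hom h -> is_TopL_hom k -> is_TopL_hom (k \o h).
Proof.
move=> [hc hcst hop] [kc kcst kop]; split.
- by move=> x; apply: continuous_comp; [exact: hc | exact: kc].
- by move=> c /=; rewrite hcst kcst.
- by move=> f xs /=; rewrite hop kop.
Qed.

Lemma surjective_TopL_epi (A B : TopL L) (e : A -> B) :
  (forall y, exists x, e x = y) -> TopL_epi e.
Proof.
move=> esurj D k1 k2 _ _ ke; apply: funext => y.
by have [x <-] := esurj y; exact: (f_equal (@^~ x) ke).
Qed.

Lemma factor_surjective_TopL_hom (A B D : TopL L) (e : A -> B) (g : A -> D)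
    (k : B -> D) :
  is_TopL_hom e -> (forall y, exists x, e x = y) -> is_TopL_hom g ->
  continuous k -> k \o e = g -> is_TopL_hom k.
Proof.
move=> [_ ecst eop] esurj [_ gcst gop] kc ke; subst g; split => //.
  by move=> c; rewrite -ecst; exact: gcst.
move=> f ys; have [xs <-] : exists xs : 'I_(arity f) -> A, e \o xs = ys.
  exists (fun i => proj1_sig (cid (esurj (ys i)))).
  by apply: funext => i; exact: proj2_sig (cid (esurj (ys i))).
by rewrite -eop; exact: gop.
Qed.

End TopLHomomorphisms.

Section InducedStructure.
Variables (L : algebraic_system) (A : TopL L) (R : topologicalType) (r : A -> R).
Hypothesis r_continuous : continuous r.
Hypothesis r_surj : forall y, exists x, r x = y.
Hypothesis r_factor_powers :
  forall (I : Type) (h : prod_topology (fun _ : I => A) -> R), continuous h ->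
  exists phi : prod_topology (fun _ : I => R) -> R,
    continuous phi /\ forall xs, phi (fun i => r (xs i)) = h xs.

Let r_sec (y : R) : A := proj1_sig (cid (r_surj y)).

Let r_secK : cancel r_sec r.
Proof. by move=> y; exact: proj2_sig (cid (r_surj y)). Qed.

Definition induced_str : Lstructure L R :=
  LStructure (fun c => r (lconst (tl_str A) c))
             (fun f ys => r (lop (tl_str A) f (r_sec \o ys))).

Let induced_lop_factor f :
  exists phi : prod_topology (fun _ : 'I_(arity f) => R) -> R,
    continuous phi /\ lop induced_str f = phi /\
    forall xs, phi (r \o xs) = r (lop (tl_str A) f xs).
Proof.
have [phi [phic phie]] : exists phi : prod_topology (fun _ : 'I_(arity f) => R) -> R,
    continuous phi /\ forall xs, phi (r \o xs) = r (lop (tl_str A) f xs).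
  apply: r_factor_powers => xs.
  by apply: continuous_comp; [exact: tl_cont | exact: r_continuous].
exists phi; split=> //; split=> //.
apply: funext => ys /=; rewrite -phie; congr phi.
by apply: funext => i /=; rewrite r_secK.
Qed.

Lemma induced_lop_image f (xs : 'I_(arity f) -> A) :
  lop induced_str f (r \o xs) = r (lop (tl_str A) f xs).
Proof. by have [phi [_ [-> ->]]] := induced_lop_factor f. Qed.

Lemma induced_lop_continuous f :
  continuous (lop induced_str f : prod_topology (fun _ : 'I_(arity f) => R) -> R).
Proof. by have [phi [phic [-> _]]] := induced_lop_factor f. Qed.

Lemma eval_term_induced (v : nat -> A) (t : term L) :
  eval_term induced_str (r \o v) t = r (eval_term (tl_str A) v t).
Proof.
elim: t => [n|c|f ts IH] //=; rewrite -[RHS]induced_lop_image.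
by congr (lop induced_str f); apply: funext => i; exact: IH.
Qed.

Lemma induced_equations t1 t2 : equations t1 t2 ->
  forall v : nat -> R, eval_term induced_str v t1 = eval_term induced_str v t2.
Proof.
move=> e v; have -> : v = r \o (r_sec \o v) by apply: funext => n /=; rewrite r_secK.
by rewrite !eval_term_induced (tl_eqs e).
Qed.

Definition induced_TopL : TopL L := MkTopL induced_lop_continuous induced_equations.

Lemma induced_TopL_hom : @is_TopL_hom L A induced_TopL r.
Proof. by split=> // f xs; rewrite /= -induced_lop_image. Qed.

End InducedStructure.

Section ReflectiveStructures.
Variables (L : algebraic_system) (C : topologicalType -> Prop).
Hypothesis C_epireflective : epireflective_Top C.
Hypothesis C_preserves_products : preserves_products C.

Lemma rC_TopL_iso_closed (A B : TopL L) :
  rC_TopL C A -> TopL_iso A B -> rC_TopL C B.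
Proof.
move=> [A0 [eta [eta_refl eta_hom]]] [h [g [h_hom g_hom hK gK]]].
have [Ciso _ _ _] := C_epireflective.
exists A0, (h \o eta); split; last exact: is_TopL_hom_comp.
apply: reflection_comp_homeomorphism => //; have [hc _ _] := h_hom.
by split=> //; exists g; have [gc _ _] := g_hom.
Qed.

Lemma rC_TopL_reflection (A : TopL L) :
  exists (B : TopL L) (eta : A -> B),
  [/\ rC_TopL C B, is_TopL_hom eta, TopL_epi eta &
   forall (D : TopL L), rC_TopL C D -> forall g : A -> D, is_TopL_hom g ->
     exists! k : B -> D, is_TopL_hom k /\ k \o eta = g].
Proof.
have [_ _ _ C_has_reflections] := C_epireflective.
have [R [r r_refl]] := C_has_reflections A.
have [CR rc rsurj runiv] := r_refl.
have r_factor_powers I (h : prod_topology (fun _ : I => A) -> R) :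
    continuous h -> exists phi : prod_topology (fun _ : I => R) -> R,
    continuous phi /\ forall xs, phi (fun i => r (xs i)) = h xs.
  exact: (@reflection_prod_factor _ C_has_reflections C_preserves_products
    I (fun _ => A) (fun _ => R) (fun _ => r) (fun _ => r_refl) _ h CR).
pose B := induced_TopL rc rsurj r_factor_powers.
have r_hom : @is_TopL_hom L A B r by exact: induced_TopL_hom.
exists B, r; split.
- by exists A, r.
- exact: r_hom.
- exact: surjective_TopL_epi.
move=> D [_ [_ [[CD _ _ _] _]]] g g_hom.
have [gc _ _] := g_hom.
have [k [[kc kr] kuniq]] := runiv D CD g gc.
exists k; split; first split=> //.
  exact: factor_surjective_TopL_hom r_hom rsurj g_hom kc kr.
by move=> k' [[k'c _ _] k'r]; apply: kuniq.
Qed.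

End ReflectiveStructures.

Theorem theorem4p3 (L : algebraic_system) (C : topologicalType -> Prop) :
  epireflective_Top C -> preserves_products C ->
  epireflective_TopL (rC_TopL C (L := L)).
Proof.
move=> C_epireflective C_preserves_products; split.
  by move=> A B; exact: rC_TopL_iso_closed.
exact: rC_TopL_reflection.
Qed.
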